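(* Let $c_1,\dots,c_m \in \mathbb{R}^{n_y}\setminus\{0\}$, $d_1,\dots,d_m\in\mathbb{R}$, and $\mathcal{Y} := \bigcup_{j=1}^m \{ y \mid c_j^\top y \geq d_j\}$. For $y,w\in\mathbb{R}^{n_y}$ let $\mathrm{dist}(y,\mathcal{Y}+w):=\min_{a\in\mathcal{Y}+w}\|y-a\|_2$ and $p_j(y,w) := \frac{d_j - c_j^\top(y-w)}{\|c_j\|_2}$. Let $\alpha\in(0,1)$, let $\mathbb{W}\subseteq\mathbb{R}^{n_y}$, let $\hat w^{(1)},\dots,\hat w^{(N)}\in\mathbb{W}$, let $\nu := \frac1N\sum_{i=1}^N \boldsymbol{\delta}_{\hat w^{(i)}}$, let $\theta>0$, and let $$\mathbb{D} := \{\mu\in\mathcal{P}(\mathbb{W}) \mid W(\mu,\nu)\le\theta\}.$$ Then for every $y\in\mathbb{R}^{n_y}$, $$\sup_{\mu\in\mathbb{D}} \mathrm{CVaR}^\mu_\alpha[\mathrm{dist}(y,\mathcal{Y}+w)] \le \inf_{z\in\mathbb{R}}\ z + \frac{1}{1-\alpha}\sup_{\mu\in\mathbb{D}} \mathbb{E}^\mu\Big[\max\big\{\min_{j=1,\dots,m} p_j(y,w) - z,\, -z,\, 0\big\}\Big],$$ where $w$ is the random variable with distribution $\mu$.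
   Context: $\mathcal{P}(\mathbb{W})$ is the set of Borel probability measures on $\mathbb{W}$, and $\boldsymbol{\delta}_{w}$ is the Dirac measure at $w$. For a random loss $X$ with distribution determined by $\mu$, $\mathrm{CVaR}^\mu_\alpha(X) := \min_{z\in\mathbb{R}} \mathbb{E}^\mu\big[z + \frac{(X-z)^+}{1-\alpha}\big]$ with $(x)^+=\max\{x,0\}$. The Wasserstein distance (of order 1) is $W(\mu,\nu) := \min_{\kappa\in\mathcal{P}(\mathbb{W}^2)}\{\int_{\mathbb{W}^2}\|w-w'\|\,\mathrm{d}\kappa(w,w') \mid \Pi^1\kappa=\mu,\ \Pi^2\kappa=\nu\}$, where $\Pi^i\kappa$ is the $i$th marginal of $\kappa$ and $\|\cdot\|$ is an arbitrary norm on $\mathbb{R}^{n_y}$. *)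

From HB Require Import structures.
From mathcomp Require Import all_boot all_order all_algebra.
From mathcomp Require Import all_classical all_reals all_analysis.
Set Implicit Arguments. Unset Strict Implicit. Unset Printing Implicit Defensive.
Import Order.TTheory GRing.Theory Num.Theory.
Import numFieldNormedType.Exports.
Local Open Scope classical_set_scope.
Local Open Scope ring_scope.

(* R^{n} as row vectors, equipped with its Borel sigma-algebra
   (generated by the open sets of the product topology). *)
Definition Vec (R : realType) (n : nat) :=
  g_sigma_algebraType (@open ('rV[R]_n)).

Definition dotv (R : realType) (n : nat) (c y : 'rV[R]_n) : R :=
  \sum_(i < n) c ord0 i * y ord0 i.
Definition norm2 (R : realType) (n : nat) (v : 'rV[R]_n) : R :=
  Num.sqrt (dotv v v).

Definition is_norm (R : realType) (n : nat) (nrm : 'rV[R]_n -> R) : Prop :=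
  [/\ forall x, 0 <= nrm x,
      forall x, nrm x = 0 -> x = 0,
      forall (a : R) x, nrm (a *: x) = `|a| * nrm x
    & forall x y, nrm (x + y) <= nrm x + nrm y].

Definition Yset (R : realType) (n m : nat) (c : 'I_m -> 'rV[R]_n) (d : 'I_m -> R)
  : set 'rV[R]_n := [set y | exists j : 'I_m, d j <= dotv (c j) y].

Definition distYw (R : realType) (n m : nat) (c : 'I_m -> 'rV[R]_n) (d : 'I_m -> R)
  (y w : 'rV[R]_n) : R :=
  inf [set norm2 (y - a) | a in [set b + w | b in Yset c d]].

Definition pj (R : realType) (n m : nat) (c : 'I_m -> 'rV[R]_n) (d : 'I_m -> R)
  (j : 'I_m) (y w : 'rV[R]_n) : R :=
  (d j - dotv (c j) (y - w)) / norm2 (c j).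

Definition CVaR (R : realType) (n : nat) (mu : probability (Vec R n) R)
  (alpha : R) (X : Vec R n -> R) : \bar R :=
  ereal_inf [set (\int[mu]_w (z + Num.max (X w - z) 0 / (1 - alpha))%:E)%E
            | z in [set: R]].

Definition empirical (R : realType) (n N : nat) (what : 'I_N -> 'rV[R]_n)
  (A : set (Vec R n)) : \bar R :=
  ((N%:R)^-1)%:E * (\sum_(i < N) \d_(what i : Vec R n) A)%E.

Definition coupling (R : realType) (n : nat) (mu : probability (Vec R n) R)
  (nu : set (Vec R n) -> \bar R) (kappa : probability (Vec R n * Vec R n)%type R) : Prop :=
  forall A : set (Vec R n), measurable A ->
    kappa (fst @^-1` A) = mu A /\ kappa (snd @^-1` A) = nu A.

Definition wasserstein (R : realType) (n : nat) (nrm : 'rV[R]_n -> R)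
  (mu : probability (Vec R n) R) (nu : set (Vec R n) -> \bar R) : \bar R :=
  ereal_inf [set (\int[kappa]_p (nrm (p.1 - p.2))%:E)%E
            | kappa in [set kappa | coupling mu nu kappa]].

(* mu is a Borel probability measure on W ⊆ R^n: it is concentrated on a
   measurable subset of W *)
Definition supported_on (R : realType) (n : nat) (mu : probability (Vec R n) R)
  (W : set 'rV[R]_n) : Prop :=
  exists A : set (Vec R n), [/\ measurable A, A `<=` W & mu A = 1%E].

Definition ambiguity (R : realType) (n N : nat) (nrm : 'rV[R]_n -> R)
  (W : set 'rV[R]_n) (what : 'I_N -> 'rV[R]_n) (theta : R)
  : set (probability (Vec R n) R) :=
  [set mu | supported_on mu W /\ (wasserstein nrm mu (empirical what) <= theta%:E)%E].

From HB Require Import structures.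
From mathcomp Require Import all_boot all_order all_algebra.
From mathcomp Require Import all_classical all_reals all_analysis.
From mathcomp Require Import ring lra.
Import Order.TTheory GRing.Theory Num.Theory.
Import numFieldNormedType.Exports.
Local Open Scope classical_set_scope.
Local Open Scope ring_scope.
Import measurable_realfun.
Set Implicit Arguments. Unset Strict Implicit. Unset Printing Implicit Defensive.

(* The Euclidean distance from a point x to a finite union of half-spaces
   {c_j . b >= d_j} is the positive part of the smallest signed distance
   p_j = (d_j - c_j . x) / |c_j|: each p_j is a lower bound by Cauchy-Schwarz,
   and it is attained by moving x by p_j along c_j.  Hence
   (dist - z)^+ = max(min_j p_j - z, -z, 0), and the bound follows by fixing z
   in the minimisation defining CVaR, bounding the expectation under mu by its
   supremum over the ambiguity set, and then taking inf over z. *)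

Section Euclidean.
Context {R : realType} {n : nat}.
Implicit Types (u v c : 'rV[R]_n) (a : R).

Lemma dotvDr c u v : dotv c (u + v) = dotv c u + dotv c v.
Proof. by rewrite /dotv -big_split; apply: eq_bigr => i _; rewrite !mxE /=; ring. Qed.

Lemma dotvBr c u v : dotv c (u - v) = dotv c u - dotv c v.
Proof. by rewrite /dotv -sumrB; apply: eq_bigr => i _; rewrite !mxE; ring. Qed.

Lemma dotvZr c a u : dotv c (a *: u) = a * dotv c u.
Proof. by rewrite /dotv mulr_sumr; apply: eq_bigr => i _; rewrite !mxE; ring. Qed.

Lemma dotvZl c a u : dotv (a *: c) u = a * dotv c u.
Proof. by rewrite /dotv mulr_sumr; apply: eq_bigr => i _; rewrite !mxE; ring. Qed.

Lemma dotvv_ge0 u : 0 <= dotv u u.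
Proof. by apply: sumr_ge0 => i _; rewrite -expr2 sqr_ge0. Qed.

Lemma dotvv_eq0 u : (dotv u u == 0) = (u == 0).
Proof.
apply/idP/eqP => [|->]; last by rewrite /dotv big1 // => i _; rewrite mxE mul0r.
rewrite psumr_eq0 => [/allP u0|i _]; last by rewrite -expr2 sqr_ge0.
apply/rowP => i; rewrite mxE.
by move: (u0 i (mem_index_enum _)); rewrite /= mulf_eq0 orbb => /eqP.
Qed.

Lemma dotv_Lagrange c u :
  \sum_(i < n) \sum_(j < n) (c ord0 i * u ord0 j - c ord0 j * u ord0 i) ^+ 2
  = 2 * (dotv c c * dotv u u - dotv c u ^+ 2).
Proof.
rewrite /dotv.
set a := fun i => c ord0 i * c ord0 i.
set b := fun i => u ord0 i * u ord0 i.
set p := fun i => c ord0 i * u ord0 i.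
transitivity
  (\sum_(i < n) \sum_(j < n) (a i * b j + a j * b i - 2 * (p i * p j))).
  by apply: eq_bigr => i _; apply: eq_bigr => j _; rewrite /a /b /p; ring.
under eq_bigr => i _ do rewrite sumrB big_split /=.
rewrite sumrB big_split /= expr2 mulrBr mulrDl mul1r.
congr (_ + _ - _).
- by rewrite mulr_suml; apply: eq_bigr => i _; rewrite mulr_sumr.
- rewrite mulr_suml exchange_big /=; apply: eq_bigr => i _; rewrite mulr_sumr.
  by apply: eq_bigr => j _; rewrite mulrC.
- rewrite mulr_suml mulr_sumr; apply: eq_bigr => i _; rewrite !mulr_sumr.
  by apply: eq_bigr => j _; rewrite mulrA.
Qed.

Lemma dotv_sqr_le c u : dotv c u ^+ 2 <= dotv c c * dotv u u.
Proof.
have : 0 <= \sum_(i < n) \sum_(j < n)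
    (c ord0 i * u ord0 j - c ord0 j * u ord0 i) ^+ 2.
  by apply: sumr_ge0 => i _; apply: sumr_ge0 => j _; rewrite sqr_ge0.
rewrite dotv_Lagrange; nra.
Qed.

Lemma dotv_le_norm2 c u : dotv c u <= norm2 c * norm2 u.
Proof.
rewrite /norm2 -sqrtrM ?dotvv_ge0 //; apply: (le_trans (ler_norm _)).
by rewrite -sqrtr_sqr; apply: ler_wsqrtr; exact: dotv_sqr_le.
Qed.

Lemma norm2_ge0 u : 0 <= norm2 u.
Proof. exact: sqrtr_ge0. Qed.

Lemma norm2_gt0 u : u != 0 -> 0 < norm2 u.
Proof. by move=> u0; rewrite sqrtr_gt0 lt_def dotvv_ge0 dotvv_eq0 u0. Qed.

Lemma norm20 : norm2 (0 : 'rV[R]_n) = 0.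
Proof. by apply/eqP; rewrite sqrtr_eq0 le_eqVlt dotvv_eq0 eqxx. Qed.

Lemma sqr_norm2 u : norm2 u ^+ 2 = dotv u u.
Proof. by rewrite sqr_sqrtr ?dotvv_ge0. Qed.

Lemma norm2Z a u : norm2 (a *: u) = `|a| * norm2 u.
Proof. by rewrite /norm2 dotvZr dotvZl mulrA -expr2 sqrtrM ?sqr_ge0 // sqrtr_sqr. Qed.

Lemma norm2N u : norm2 (- u) = norm2 u.
Proof. by rewrite -scaleN1r norm2Z normrN normr1 mul1r. Qed.

End Euclidean.

Section HalfSpace.
Context {R : realType} {n : nat} {c : 'rV[R]_n} (dc : R).
Hypothesis c_neq0 : c != 0.

Let signed_dist x := (dc - dotv c x) / norm2 c.

Lemma signed_dist_le_norm2 x b : dc <= dotv c b -> signed_dist x <= norm2 (x - b).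
Proof.
move=> hb; rewrite /signed_dist ler_pdivrMr ?norm2_gt0 //.
have := dotv_le_norm2 c (b - x); rewrite dotvBr -[norm2 (b - x)]norm2N opprB; lra.
Qed.

Lemma halfspace_dist_attained x :
  exists2 b, dc <= dotv c b & norm2 (x - b) = Num.max (signed_dist x) 0.
Proof.
have nc : 0 < norm2 c := norm2_gt0 c_neq0.
have [p_le0|p_gt0] := leP (signed_dist x) 0.
  exists x; last by rewrite subrr norm20.
  by move: p_le0; rewrite /signed_dist pmulr_lle0 ?invr_gt0 //; lra.
exists (x + (signed_dist x / norm2 c) *: c).
  rewrite dotvDr dotvZr -sqr_norm2 /signed_dist.
  have -> : (dc - dotv c x) / norm2 c / norm2 c * norm2 c ^+ 2 = dc - dotv c x.
    by field; rewrite gt_eqF.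
  lra.
rewrite opprD addrA subrr add0r norm2N norm2Z.
by rewrite ger0_norm ?(divr_ge0 (ltW p_gt0) (ltW nc)) // divfK ?gt_eqF.
Qed.

End HalfSpace.

Lemma distYw_eq (R : realType) (n m : nat) (c : 'I_m -> 'rV[R]_n) (d : 'I_m -> R)
  (hm : (0 < m)%N) (hc : forall j, c j != 0) (y w : 'rV[R]_n) :
  distYw c d y w =
  Num.max (\big[Num.min/pj c d (Ordinal hm) y w]_(j < m) pj c d j y w) 0.
Proof.
set p := fun j => pj c d j y w; set M := Num.max _ 0.
set S := [set norm2 (y - a) | a in [set b + w | b in Yset c d]].
have M_lb : lbound S M.
  move=> _ [_ [b [j hj] <-] <-]; rewrite ge_max norm2_ge0 andbT.
  apply: (le_trans (bigmin_le _ j _)).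
  by rewrite opprD addrA addrAC; exact: signed_dist_le_norm2.
pose j0 := [arg min_(j < Ordinal hm) p j]%O.
have min_p : \big[Num.min/p (Ordinal hm)]_(j < m) p j = p j0.
  rewrite /j0; case: arg_minP => // i _ p_i.
  apply/eqP; rewrite eq_le bigmin_le /=.
  by apply/bigmin_geP; split => [|j _]; apply: p_i.
have S_M : S M.
  have [b hb b_dist] := halfspace_dist_attained (d j0) (hc j0) (y - w).
  exists (b + w); first by exists b => //; exists j0.
  by rewrite opprD addrA addrAC b_dist /M -/p min_p.
apply/eqP; rewrite eq_le ge_inf ?lb_le_inf //; by exists M.
Qed.

Lemma measurable_coord (R : realType) (n : nat) (i : 'I_n) :
  measurable_fun setT (fun w : Vec R n => w ord0 i).
Proof.
apply: (measurability _ (RGenOpens.measurableE R)).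
move=> _ [_ [a [b ->] <-]]; rewrite setTI; apply: sub_sigma_algebra.
have /continuousP := @coord_continuous R 1 n ord0 i.
by apply; exact: interval_open.
Qed.

Lemma measurable_bigmin d (T : measurableType d) (R : realType) (I : Type)
  (s : seq I) (f0 : T -> R) (F : I -> T -> R) :
  measurable_fun setT f0 -> (forall j, measurable_fun setT (F j)) ->
  measurable_fun setT (fun x => \big[Num.min/f0 x]_(j <- s) F j x).
Proof.
move=> mf0 mF; elim: s => [|j s IHs].
  by under eq_fun => x do rewrite big_nil.
under eq_fun => x do rewrite big_cons.
exact: measurable_minr.
Qed.

Lemma measurable_pj (R : realType) (n m : nat) (c : 'I_m -> 'rV[R]_n)
  (d : 'I_m -> R) (j : 'I_m) (y : 'rV[R]_n) :
  measurable_fun setT (fun w : Vec R n => pj c d j y w).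
Proof.
apply: measurable_funM; last exact: measurable_cst.
apply: measurable_funB; first exact: measurable_cst.
apply: measurable_sum => i; apply: measurable_funM; first exact: measurable_cst.
under eq_fun => w do rewrite !mxE.
by apply: measurable_funB; [exact: measurable_cst | exact: measurable_coord].
Qed.

Lemma measurable_distYw (R : realType) (n m : nat) (c : 'I_m -> 'rV[R]_n)
  (d : 'I_m -> R) (hm : (0 < m)%N) (hc : forall j, c j != 0) (y : 'rV[R]_n) :
  measurable_fun setT (fun w : Vec R n => distYw c d y w).
Proof.
under eq_fun => w do rewrite (distYw_eq d hm hc).
apply: measurable_maxr; last exact: measurable_cst.
by apply: measurable_bigmin => [|j]; exact: measurable_pj.
Qed.

Lemma integral_affine_le d (T : measurableType d) (R : realType)
  (mu : probability T R) (a b : R) (h : T -> R) :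
  0 < b -> measurable_fun setT h -> (forall x, 0 <= h x) ->
  (\int[mu]_x (a + b * h x)%:E <= a%:E + b%:E * \int[mu]_x (h x)%:E)%E.
Proof.
move=> b_gt0 mh h_ge0.
have [h_oo|h_fin] := eqVneq (\int[mu]_x (h x)%:E)%E +oo%E.
  by rewrite h_oo mulry gtr0_sg // mul1e addey ?leey.
have ih : mu.-integrable setT (fun x => (h x)%:E).
  apply/integrableP; split; first exact/measurable_EFinP.
  under eq_integral => x _ do rewrite gee0_abs ?lee_fin //.
  by rewrite ltey.
under eq_integral => x _ do rewrite EFinD EFinM.
rewrite integralD //; last exact: integrableZl.
  rewrite integralZl // integral_cst // [X in (X + _)%E](_ : _ = a%:E) //.
  by rewrite -[RHS]mule1; congr (_ * _)%E; exact: probability_setT.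
exact: finite_measure_integrable_cst.
Qed.

Lemma CVaR_le_at (R : realType) (n : nat) (mu : probability (Vec R n) R)
  (alpha z : R) (X : Vec R n -> R) :
  alpha < 1 -> measurable_fun setT X ->
  (CVaR mu alpha X <=
   z%:E + ((1 - alpha)^-1)%:E * \int[mu]_w (Num.max (X w - z) 0)%:E)%E.
Proof.
move=> alpha_lt1 mX.
have inv_gt0 : 0 < (1 - alpha)^-1 by rewrite invr_gt0 subr_gt0.
have m_excess : measurable_fun setT (fun w => Num.max (X w - z) 0).
  by apply: measurable_maxr; [exact: measurable_funB | exact: measurable_cst].
apply: le_trans (integral_affine_le mu z inv_gt0 m_excess _); last first.
  by move=> w; rewrite le_max lexx orbT.
apply: ereal_inf_lbound; exists z => //.
by apply: eq_integral => w _; rewrite mulrC.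
Qed.

Lemma maxr0_subr (R : realDomainType) (a z : R) :
  Num.max (Num.max a 0 - z) 0 = Num.max (Num.max (a - z) (- z)) 0.
Proof. by rewrite real_addr_maxl ?num_real // sub0r. Qed.

Theorem lemma2 (R : realType) (n m N : nat)
  (c : 'I_m -> 'rV[R]_n) (d : 'I_m -> R)
  (hm : (0 < m)%N) (hc : forall j, c j != 0)
  (alpha : R) (halpha : 0 < alpha < 1)
  (nrm : 'rV[R]_n -> R) (hnrm : is_norm nrm)
  (W : set 'rV[R]_n) (what : 'I_N -> 'rV[R]_n)
  (hN : (0 < N)%N) (hwhat : forall i, W (what i))
  (theta : R) (htheta : 0 < theta)
  (y : 'rV[R]_n) :
  (ereal_sup [set CVaR mu alpha (fun w : Vec R n => distYw c d y w)
             | mu in ambiguity nrm W what theta]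
   <= ereal_inf [set (z%:E + ((1 - alpha)^-1)%:E *
         ereal_sup [set (\int[mu]_w
              (Num.max (Num.max
                 (\big[Num.min/pj c d (Ordinal hm) y w]_(j < m) pj c d j y w - z)
                 (- z)) 0)%:E)
                   | mu in ambiguity nrm W what theta])
        | z in [set: R]])%E.
Proof.
apply: ge_ereal_sup => _ [mu D_mu <-]; apply: le_ereal_inf_tmp => _ [z _ <-].
have alpha_lt1 : alpha < 1 by case/andP: halpha.
apply: le_trans (CVaR_le_at mu z alpha_lt1 (measurable_distYw d hm hc y)) _.
rewrite leeD2l //; apply: lee_wpmul2l.
  by rewrite lee_fin invr_ge0 subr_ge0 ltW.
apply: ereal_sup_ubound; exists mu => //.
by apply: eq_integral => w _; rewrite (distYw_eq d hm hc) maxr0_subr.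
Qed.
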